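(* Let $R=k[x_1,x_2,x_3]$ and let $A=R/I$ be an Artinian algebra with $h$-vector $(1,3,h_2,\ldots,h_s)$ and socle degree $s$. If $h_{d-1}-h_d=2(h_d-h_{d+1})>0$ for some $d$ with $r_1(A)<d<s$, then $A$ is not level.
   Context: $k$ is an infinite field of characteristic $0$; $h_i=\dim_kA_i$, $A_s\neq0$. $A$ is level if its socle $\{a\in A:a\mathfrak m=0\}$ ($\mathfrak m$ the maximal homogeneous ideal) is concentrated in a single degree. $r_1(A)=\min\{\ell:(R/(I+(L)))_{\ell+1}=0\}$ for a general linear form $L$ (equivalently $\min\{\ell: x_2^{\ell+1}\in\mathrm{Gin}(I)\}$, generic initial ideal for degree reverse lexicographic order). *)

From HB Require Import structures.
From mathcomp Require Import all_boot all_order all_algebra.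
From mathcomp Require Export mpoly.
Set Implicit Arguments. Unset Strict Implicit. Unset Printing Implicit Defensive.
Import Order.TTheory GRing.Theory Num.Theory.
Local Open Scope ring_scope.

(* R = k[x_1,x_2,x_3] is {mpoly k[3]}; variables x_1,x_2,x_3 are 'X_0,'X_1,'X_2. *)

Section Defs.
Variable k : fieldType.
Notation R := {mpoly k[3]}.

Definition hcomp (d : nat) (p : R) : R :=
  \sum_(m <- msupp p | mdeg m == d) p@_m *: 'X_[m].

Definition homog_ideal (I : pred R) : Prop :=
  [/\ 0 \in I,
      (forall p q, p \in I -> q \in I -> p + q \in I),
      (forall p q, q \in I -> p * q \in I)
    & (forall p d, p \in I -> hcomp d p \in I)].

(* The family f of degree-i forms is linearly independent in A_i = (R/I)_i *)
Definition indep_mod (I : pred R) (i n : nat) (f : 'I_n -> R) : Prop :=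
  (forall j, f j \is i.-homog) /\
  (forall c : 'I_n -> k, (\sum_j c j *: f j) \in I -> forall j, c j = 0).

(* dim_k (R/I)_i = n *)
Definition dimA (I : pred R) (i n : nat) : Prop :=
  (exists f : 'I_n -> R, indep_mod I i f) /\
  (forall f : 'I_n.+1 -> R, ~ indep_mod I i f).

(* (R/J)_j = 0 where J = I + (L) *)
Definition quot_vanishes (I : pred R) (L : R) (j : nat) : Prop :=
  forall p : R, p \is j.-homog -> exists q g : R, q \in I /\ p = q + L * g.

Definition linform (a : 'I_3 -> k) : R := \sum_(j < 3) a j *: 'X_j.

(* a property of linear forms holds for a general linear form: it holds on a
   nonempty Zariski-open subset of the coefficient space k^3, i.e. outside
   the zero locus of some nonzero polynomial F *)
Definition general (P : R -> Prop) : Prop :=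
  exists F : R, F != 0 /\ forall a : 'I_3 -> k, F.@[a] != 0 -> P (linform a).

(* r = r_1(A): least l with (R/(I+(L)))_(l+1) = 0 for a general linear form L *)
Definition is_r1 (I : pred R) (r : nat) : Prop :=
  general (fun L => quot_vanishes I L r.+1) /\
  (forall l, (l < r)%N -> ~ general (fun L => quot_vanishes I L l.+1)).

(* socle of A = R/I: classes a with a * m = 0, i.e. x_j * p in I for all j *)
Definition in_socle (I : pred R) (p : R) : Prop :=
  forall j : 'I_3, 'X_j * p \in I.

(* A is level: its socle is concentrated in a single degree e *)
Definition is_level (I : pred R) : Prop :=
  exists e : nat, forall p : R, in_socle I p ->
    exists q : R, q \is e.-homog /\ p - q \in I.
End Defs.

From mathcomp Require Import all_boot all_order all_algebra.
From mathcomp Require Import mpoly.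
From Stdlib Require Import Classical Lia.
From mathcomp Require Import zify.
Set Implicit Arguments. Unset Strict Implicit. Unset Printing Implicit Defensive.
Import GRing.Theory.
Local Open Scope ring_scope.

(* Let L be a general linear form, so that multiplication by L maps A_j onto
   A_(j+1) for every j >= r_1(A), and let K_j be the degree-j part of the
   annihilator (0 :_A L).  Then dim K_(d-1) >= h_(d-1) - h_d = 2m, while
   dim K_d = h_d - h_(d+1) = m > 0.  Complete L to a basis L, l, z of R_1.
   Multiplication by l maps K_(d-1) into K_d, so W := K_(d-1) /\ (0 :_A l)
   has dimension at least m.  If A is level, its socle lives in degree s, so
   an element of W killed by z, being killed by the whole maximal ideal, is 0:
   z is injective on W, hence z W = K_d and l K_d = z (l W) = 0.  By symmetry
   z K_d = 0 as well, so the nonzero space K_d lies in the socle in degree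
   d < s, a contradiction. *)

Section FreeModulo.
Variables (k : fieldType) (V : lmodType k).
Implicit Types (S T Z : V -> Prop) (u v : V).

Definition subspace S :=
  [/\ S 0, forall u v, S u -> S v -> S (u + v) & forall c v, S v -> S (c *: v)].

Definition free_mod Z n (f : 'I_n -> V) :=
  forall c : 'I_n -> k, Z (\sum_i c i *: f i) -> forall i, c i = 0.

(* [dim_mod_ge Z S n] and [dim_mod_le Z S m] say that the image of S in the
   quotient V/Z has dimension at least n, resp. at most m; the quotient space
   itself is never formed. *)
Definition dim_mod_ge Z S n :=
  exists f : 'I_n -> V, (forall i, S (f i)) /\ free_mod Z f.

Definition dim_mod_le Z S m :=
  forall n (f : 'I_n -> V), (forall i, S (f i)) -> free_mod Z f -> (n <= m)%N.

Section Subspace.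
Variables (S : V -> Prop) (sS : subspace S).

Lemma subspace0 : S 0. Proof. by case: sS. Qed.

Lemma subspaceD u v : S u -> S v -> S (u + v). Proof. by case: sS => _ + _; apply. Qed.

Lemma subspaceZ c v : S v -> S (c *: v). Proof. by case: sS => _ _; apply. Qed.

Lemma subspaceB u v : S u -> S v -> S (u - v).
Proof. by move=> Su /(subspaceZ (-1)); rewrite scaleN1r; apply: subspaceD. Qed.

Lemma subspaceZK c v : c != 0 -> S (c *: v) -> S v.
Proof. by move=> c0 /(subspaceZ c^-1); rewrite scalerA mulVf // scale1r. Qed.

Lemma subspace_sum (J : Type) (r : seq J) (P : pred J) (F : J -> V) :
  (forall j, P j -> S (F j)) -> S (\sum_(j <- r | P j) F j).
Proof. by move=> SF; apply: big_ind => //; [apply: subspace0 | apply: subspaceD]. Qed.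

Lemma subspace_comb n (c : 'I_n -> k) (f : 'I_n -> V) :
  (forall i, S (f i)) -> S (\sum_i c i *: f i).
Proof. by move=> Sf; apply: subspace_sum => i _; apply: subspaceZ. Qed.

End Subspace.

Lemma subspaceI S T : subspace S -> subspace T -> subspace (fun v => S v /\ T v).
Proof.
move=> sS sT; split=> [|u v [? ?] [? ?]|c v [? ?]]; split;
  by [apply: subspace0 | apply: subspaceD | apply: subspaceZ].
Qed.

Lemma not_free_mod Z n (f : 'I_n -> V) : ~ free_mod Z f ->
  exists c : 'I_n -> k, Z (\sum_i c i *: f i) /\ exists i, c i != 0.
Proof.
move=> nfree; apply: NNPP => nrel; apply: nfree => c Zc i; apply: NNPP => ci.
by apply: nrel; exists c; split => //; exists i; apply/eqP.
Qed.

Lemma dim_mod_le_rel Z S m n (f : 'I_n -> V) : dim_mod_le Z S m -> (m < n)%N ->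
  (forall i, S (f i)) -> exists c : 'I_n -> k, Z (\sum_i c i *: f i) /\ exists i, c i != 0.
Proof.
by move=> le_m lt_mn Sf; apply: not_free_mod => /(le_m _ _ Sf); rewrite leqNgt lt_mn.
Qed.

Lemma free_mod_notin Z n (f : 'I_n -> V) i : free_mod Z f -> ~ Z (f i).
Proof.
move=> free_f Zfi; have Zdelta : Z (\sum_j (j == i)%:R *: f j).
  rewrite (bigD1 i) //= eqxx scale1r big1 ?addr0 // => j /negbTE->.
  by rewrite scale0r.
by have /eqP := free_f _ Zdelta i; rewrite eqxx oner_eq0.
Qed.

Lemma dim_mod_ge_witness Z S n : dim_mod_ge Z S n -> (0 < n)%N ->
  exists2 v, S v & ~ Z v.
Proof. by move=> [f [Sf free_f]] n0; exists (f (Ordinal n0)) => //; exact: free_mod_notin free_f. Qed.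

Lemma dim_mod_ge_le Z S m n : (m <= n)%N -> dim_mod_ge Z S n -> dim_mod_ge Z S m.
Proof.
move=> le_mn [f [Sf free_f]]; exists (fun i => f (widen_ord le_mn i)); split=> // c Zc.
case: m le_mn c Zc => [_ _ _ []//|m] le_mn c Zc i.
pose c' (j : 'I_n) := if (j < m.+1)%N then c (inord j) else 0.
have := free_f c' _ (widen_ord le_mn i); rewrite /c' /= ltn_ord inord_val; apply.
rewrite (bigID (fun j : 'I_n => (j < m.+1)%N)) /= [X in _ + X]big1 => [|j /negbTE->].
  by rewrite addr0 (big_ord_narrow le_mn); under eq_bigr do rewrite /= ltn_ord inord_val.
by rewrite scale0r.
Qed.

Lemma dim_mod_le_not_ge Z S m : ~ dim_mod_ge Z S m.+1 -> dim_mod_le Z S m.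
Proof.
move=> nge n f Sf free_f; rewrite leqNgt; apply/negP => lt_mn.
by apply: nge; apply: dim_mod_ge_le lt_mn _; exists f.
Qed.

Lemma dim_mod_le0_sub Z S v : subspace Z -> dim_mod_le Z S 0 -> S v -> Z v.
Proof.
move=> sZ le0 Sv; apply: NNPP => Zv; suff : (1 <= 0)%N by [].
apply: (le0 _ (fun=> v)) => // c; rewrite big_ord1 => Zc i; rewrite (ord1 i).
have [//|c0] := eqVneq (c ord0) 0; exfalso; exact: Zv (subspaceZK sZ c0 Zc).
Qed.

Lemma dim_mod_ge0 Z S : dim_mod_ge Z S 0.
Proof. by exists (fun _ => 0); split=> [[]|c _ []]. Qed.

Definition fcons n v (f : 'I_n -> V) (i : 'I_n.+1) : V :=
  if unlift ord0 i is Some j then f j else v.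

Lemma fconsP (P : V -> Prop) n v (f : 'I_n -> V) :
  P v -> (forall j, P (f j)) -> forall i, P (fcons v f i).
Proof. by move=> Pv Pf i; rewrite /fcons; case: unlift. Qed.

Lemma sum_fcons n v (f : 'I_n -> V) (c : 'I_n.+1 -> k) :
  \sum_i c i *: fcons v f i = c ord0 *: v + \sum_j c (lift ord0 j) *: f j.
Proof.
rewrite big_ord_recl /fcons unlift_none; congr (_ + _).
by apply: eq_bigr => j _; rewrite liftK.
Qed.

Definition add_line Z v0 v := exists t, Z (v - t *: v0).

Lemma subspace_add_line Z v0 : subspace Z -> subspace (add_line Z v0).
Proof.
move=> sZ; split=> [|u v [t Zu] [t' Zv]|c v [t Zv]].
- by exists 0; rewrite scale0r subr0; apply: subspace0.
- exists (t + t'); rewrite scalerDl opprD addrACA; exact: subspaceD.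
- by exists (c * t); rewrite -scalerA -scalerBr; apply: subspaceZ.
Qed.

Lemma free_mod_cons Z v n (w : 'I_n -> V) :
  subspace Z -> ~ Z v -> free_mod (add_line Z v) w -> free_mod Z (fcons v w).
Proof.
move=> sZ Zv free_w c; rewrite sum_fcons => Zc.
have cw : forall j, c (lift ord0 j) = 0.
  by apply: (free_w (fun j => c (lift ord0 j))); exists (- c ord0); rewrite scaleNr opprK addrC.
have c0 : c ord0 = 0.
  have [//|c0] := eqVneq (c ord0) 0; exfalso; apply: Zv; apply: (subspaceZK sZ c0).
  by move: Zc; rewrite big1 ?addr0 // => j _; rewrite cw scale0r.
by move=> i; case: (unliftP ord0 i) => [j ->|->].
Qed.

Lemma free_mod_exchange Z n (f : 'I_n.+1 -> V) c i0 : free_mod Z f -> c i0 != 0 ->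
  free_mod (add_line Z (\sum_i c i *: f i)) (fun j => f (lift i0 j)).
Proof.
move=> free_f ci0 e [t Zt].
pose c' i := (if unlift i0 i is Some j then e j else 0) - t * c i.
have c'0 : forall i, c' i = 0.
  apply: free_f; congr Z: Zt; symmetry; rewrite /c'; under eq_bigr do rewrite scalerBl.
  rewrite sumrB scaler_sumr; congr (_ - _); last by apply: eq_bigr => i _; rewrite scalerA.
  rewrite (bigD1_ord i0) //= unlift_none scale0r add0r.
  by apply: eq_bigr => j _; rewrite liftK.
have t0 : t = 0.
  by have /eqP := c'0 i0; rewrite /c' unlift_none sub0r oppr_eq0 mulf_eq0 (negbTE ci0) orbF => /eqP.
by move=> j; have := c'0 (lift i0 j); rewrite /c' liftK t0 mul0r subr0.
Qed.

(* dim (S /\ T mod Z) >= dim (S mod Z) - dim (S mod T), by exchanging the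
   elements of an independent family one at a time against vectors of T. *)
Lemma free_mod_cap S T Z M N : subspace S -> subspace Z ->
  dim_mod_le T S M -> dim_mod_ge Z S N ->
  exists2 n, (N <= n + M)%N & dim_mod_ge Z (fun v => S v /\ T v) n.
Proof.
move=> sS + le_M; elim: N Z => [|N IHN] Z sZ; first by exists 0%N; last exact: dim_mod_ge0.
case: (leqP N.+1 M) => [le_NM _|lt_MN [f [Sf free_f]]].
  by exists 0%N; last exact: dim_mod_ge0.
have [c [Tv [i0 ci0]]] := dim_mod_le_rel le_M lt_MN Sf.
set v := \sum_i c i *: f i in Tv.
have Zv : ~ Z v by move=> /free_f/(_ i0)/eqP; apply/negP.
have [n le_N [w [STw free_w]]] := IHN _ (subspace_add_line v sZ)
  (ex_intro _ _ (conj (fun j => Sf _) (free_mod_exchange free_f ci0))).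
exists n.+1; first by rewrite addSn ltnS.
exists (fcons v w); split; last exact: free_mod_cons.
by apply: (fconsP (P := fun u => S u /\ T u)) => //; split=> //; apply: subspace_comb.
Qed.

Lemma dim_mod_le_sub Z S T m : subspace T -> (forall v, Z v -> T v) ->
  dim_mod_le Z S m -> dim_mod_ge Z (fun v => S v /\ T v) m -> forall v, S v -> T v.
Proof.
move=> sT ZT le_m [w [STw free_w]] v Sv.
have [c [+ [i ci]]] := dim_mod_le_rel le_m (ltnSn m) (fconsP Sv (fun j => (STw j).1)).
rewrite sum_fcons => Zc.
have c0 : c ord0 != 0.
  apply: contraTneq ci => c0; move: Zc; rewrite c0 scale0r add0r => /free_w cw.
  by case: (unliftP ord0 i) => [j ->|->]; rewrite ?cw ?c0 eqxx.
apply: (subspaceZK sT c0).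
have := subspaceB sT (ZT _ Zc) (subspace_comb sT (fun j => c (lift ord0 j)) (fun j => (STw j).2)).
by rewrite addrK.
Qed.

End FreeModulo.

Section LinearMap.
Variables (k : fieldType) (V W : lmodType k) (phi : {linear V -> W}).

Lemma linear_comb n (c : 'I_n -> k) (f : 'I_n -> V) :
  phi (\sum_i c i *: f i) = \sum_i c i *: phi (f i).
Proof. by rewrite linear_sum; apply: eq_bigr => i _; rewrite linearZ. Qed.

Lemma subspace_image_mod S (Z' : W -> Prop) : subspace S -> subspace Z' ->
  subspace (fun w => exists2 v, S v & Z' (w - phi v)).
Proof.
move=> sS sZ'; split=> [|w w' [v Sv Zw] [v' Sv' Zw']|c w [v Sv Zw]].
- by exists 0; [apply: subspace0 | rewrite linear0 subr0; apply: subspace0].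
- exists (v + v'); first exact: subspaceD.
  by rewrite linearD opprD addrACA; apply: subspaceD.
- by exists (c *: v); [apply: subspaceZ | rewrite linearZ -scalerBr; apply: subspaceZ].
Qed.

Lemma dim_mod_le_comap S (S' Z' : W -> Prop) m : (forall v, S v -> S' (phi v)) ->
  dim_mod_le Z' S' m -> dim_mod_le (fun v => Z' (phi v)) S m.
Proof.
move=> SS' le_m n f Sf free_f; apply: (le_m _ (phi \o f)) => [i|c]; first exact/SS'/Sf.
by rewrite /= -linear_comb; apply: free_f.
Qed.

Lemma free_mod_map S Z (Z' : W -> Prop) n (f : 'I_n -> V) : subspace S ->
  (forall v, S v -> Z' (phi v) -> Z v) -> (forall i, S (f i)) -> free_mod Z f ->
  free_mod Z' (phi \o f).
Proof.
move=> sS inj_phi Sf free_f c /=; rewrite -linear_comb.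
by move=> /(inj_phi _ (subspace_comb sS c Sf)); apply: free_f.
Qed.

Lemma dim_mod_le_ker S Z (S' Z' : W -> Prop) m n : subspace Z' ->
  (forall v, Z v -> Z' (phi v)) -> (forall w, S' w -> exists2 v, S v & Z' (w - phi v)) ->
  dim_mod_le Z S m -> dim_mod_ge Z' S' n ->
  dim_mod_le Z (fun v => S v /\ Z' (phi v)) (m - n).
Proof.
move=> sZ' ZZ' onto le_m [g [S'g free_g]] N f Sf free_f.
have /fin_all_exists[v Sv] : forall j, exists v, S v /\ Z' (g j - phi v).
  by move=> j; have [v ? ?] := onto _ (S'g j); exists v.
pose F i := match split i with inl a => f a | inr b => v b end.
have Fl a : F (lshift n a) = f a by rewrite /F (unsplitK (inl a)).
have Fr b : F (rshift N b) = v b by rewrite /F (unsplitK (inr b)).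
suff /(leq_sub2r n) : (N + n <= m)%N by rewrite addnK.
apply: (le_m _ F) => [i|c].
  by rewrite /F; case: split => [a|b]; [exact: (Sf a).1 | exact: (Sv b).1].
rewrite big_split_ord /=; under eq_bigr do rewrite Fl; under [X in _ + X]eq_bigr do rewrite Fr.
set sf := \sum_a _; set sv := \sum_b _ => Zc.
have Z'sf : Z' (phi sf).
  by rewrite linear_comb; apply: (subspace_comb sZ') => a; exact: (Sf a).2.
have Z'sv : Z' (phi sv).
  by have := subspaceB sZ' (ZZ' _ Zc) Z'sf; rewrite linearD addrC addKr.
have c2 : forall b, c (rshift N b) = 0.
  apply: free_g; have -> : \sum_b c (rshift N b) *: g b =
      \sum_b c (rshift N b) *: (g b - phi (v b)) + phi sv.
    rewrite /sv linear_comb -big_split; apply: eq_bigr => b _.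
    by rewrite /= -scalerDr subrK.
  by apply: (subspaceD sZ' _ Z'sv); apply: (subspace_comb sZ') => b; exact: (Sv b).2.
have c1 : forall a, c (lshift n a) = 0.
  by apply: free_f; move: Zc; rewrite /sv big1 ?addr0 // => b _; rewrite c2 scale0r.
by move=> i; rewrite -(splitK i); case: split => [a|b]; [apply: c1 | apply: c2].
Qed.

End LinearMap.

Lemma base_digits_inj N n (a b : 'I_n -> nat) :
  (forall i, a i < N)%N -> (forall i, b i < N)%N ->
  (\sum_(i < n) N ^ i * a i = \sum_(i < n) N ^ i * b i)%N -> a =1 b.
Proof.
elim: n a b => [|n IHn] a b aN bN; first by move=> _ [].
rewrite !big_ord_recl !expn0 !mul1n.
have shift (c : 'I_n.+1 -> nat) :
    (\sum_(i < n) N ^ lift ord0 i * c (lift ord0 i) = (\sum_(i < n) N ^ i * c (lift ord0 i)) * N)%N.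
  by rewrite big_distrl; apply: eq_bigr => i _; rewrite /= expnS -mulnA mulnC.
rewrite !shift ![(a ord0 + _)%N]addnC ![(b ord0 + _)%N]addnC => /(congr1 (edivn^~ N)).
rewrite !edivn_eq // => -[/IHn eq_ab eq_a0] i.
by case: (unliftP ord0 i) => [j ->|->] //; apply: eq_ab.
Qed.

Section Nonroot.
Variables (k : fieldType) (k0 : [pchar k] =i pred0).

Lemma pchar0_natr_inj : injective (fun n : nat => n%:R : k).
Proof.
move=> i j /= eq_ij; wlog le_ij : i j eq_ij / (i <= j)%N => [W|].
  by case: (leqP i j) => [/(W _ _ eq_ij)//|/ltnW/(W _ _ (esym eq_ij))].
apply/eqP; rewrite eqn_leq le_ij -subn_eq0 -(pcharf0P k).1 //.
move: eq_ij; rewrite -(subnK le_ij) natrD -{1}[i%:R]add0r addnK => /addIr <-.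
exact: eqxx.
Qed.

Lemma poly_nonroot (p : {poly k}) : p != 0 -> exists t, p.[t] != 0.
Proof.
move=> p0; apply: NNPP => noroot.
pose s := [seq i%:R : k | i <- iota 0 (size p)].
have roots : all (root p) s.
  by apply/allP => t _; apply/negPn/negP => pt; apply: noroot; exists t.
have := max_poly_roots p0 roots; rewrite map_inj_uniq ?iota_uniq //; last exact: pchar0_natr_inj.
by rewrite size_map size_iota ltnn => /(_ isT).
Qed.

(* Kronecker substitution x_i := t ^ N ^ i, injective on the support of F
   since all exponents occurring in F are below N. *)
Lemma mpoly_nonroot n (F : {mpoly k[n]}) : F != 0 -> exists v, F.@[v] != 0.
Proof.
move=> F0; set N := msize F.
have ltN m i : m \in msupp F -> (m i < N)%N.
  move/msize_mdeg_lt; apply: leq_ltn_trans.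
  by rewrite mdegE (bigD1 i) //= leq_addr.
pose e (m : 'X_{1..n}) := (\sum_(i < n) N ^ i * m i)%N.
have e_inj : {in msupp F &, injective e}.
  by move=> m m' Fm Fm' /base_digits_inj eq_m; apply/mnmP/eq_m => i; apply: ltN.
pose P : {poly k} := \sum_(m <- msupp F) F@_m *: 'X^(e m).
have PE t : P.[t] = F.@[fun i => t ^+ (N ^ i)].
  rewrite horner_sum mevalE; apply: eq_bigr => m _.
  rewrite hornerZ hornerXn; congr (_ * _); rewrite -prodrXr; apply: eq_bigr => i _.
  by rewrite exprM.
have P0 : P`_(e (mlead F)) != 0.
  rewrite coef_sum (bigD1_seq (mlead F)) ?msupp_uniq ?mlead_supp //=.
  rewrite coefZ coefXn eqxx mulr1 big1_seq ?addr0 -?mcoeff_msupp ?mlead_supp //.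
  move=> m /andP[ne_m Fm]; rewrite coefZ coefXn.
  by rewrite (inj_in_eq e_inj) ?mlead_supp // eq_sym (negbTE ne_m) mulr0.
have [|t Pt] := poly_nonroot (p := P); first by apply: contraNneq P0 => ->; rewrite coef0.
by exists (fun i => t ^+ (N ^ i)); rewrite -PE.
Qed.

Lemma general_linform (P : {mpoly k[3]} -> Prop) : general P ->
  exists2 a, a ord0 != 0 & P (linform a).
Proof.
move=> [F [F0 PF]]; have [|a] := mpoly_nonroot (F := F * 'X_ord0).
  by rewrite mulf_neq0 // -msize_poly_eq0 msizeX.
by rewrite mevalM mevalXU mulf_eq0 negb_or => /andP[Fa a0]; exists a => //; apply: PF.
Qed.

End Nonroot.

Lemma pihomog_mull n (R : comNzRingType) dL e (L g : {mpoly R[n]}) : L \is dL.-homog ->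
  pihomog mdeg (dL + e) (L * g) = L * pihomog mdeg e g.
Proof.
move=> La; rewrite {1 2}[g]mpolyE mulr_sumr !linear_sum mulr_sumr; apply: eq_bigr => m _.
rewrite -scalerAr !linearZ -scalerAr /= pihomogX; congr (_ *: _).
have LXm : L * 'X_[m] \is (dL + mdeg m).-homog by apply: dhomogM; rewrite ?dhomogX.
case: eqP => [<-|/eqP ne]; first by rewrite pihomog_dE.
by rewrite mulr0 (pihomog_ne0 _ LXm) // eqn_add2l.
Qed.

Section HomogeneousIdeal.
Variables (k : fieldType) (I : pred {mpoly k[3]}) (HI : homog_ideal I).
Local Notation R := {mpoly k[3]}.
Local Notation inI := (fun p : R => p \in I).
Local Notation forms j := (fun p : R => p \is j.-homog).

Lemma idealMl p q : q \in I -> p * q \in I.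
Proof. by case: HI => _ _ + _; apply. Qed.

Lemma ideal_subspace : subspace inI.
Proof. by case: HI => I0 ID _ _; split=> // c p Ip; rewrite -mul_mpolyC; apply: idealMl. Qed.

Lemma ideal_pihomog j p : p \in I -> pihomog mdeg j p \in I.
Proof. by case: HI => _ _ _ /(_ p j); rewrite /hcomp pihomogE. Qed.

Lemma homog_subspace j : subspace (forms j).
Proof. by split=> [|p q|c p]; [apply: rpred0 | apply: rpredD | apply: rpredZ]. Qed.

Lemma mul_ideal_subspace l : subspace (fun p => l * p \in I).
Proof.
have [I0 ID IZ] := ideal_subspace.
by split=> [|p q|c p]; rewrite ?mulr0 ?mulrDr -?scalerAr //; [apply: ID | apply: IZ].
Qed.

Lemma dhomogM1 (l p : R) j : l \is 1.-homog -> p \is j.-homog -> l * p \is j.+1.-homog.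
Proof. by move=> l1 pj; rewrite -[j.+1]add1n; apply: dhomogM. Qed.

Lemma dhomogXU (i : 'I_3) : ('X_i : R) \is 1.-homog.
Proof. by rewrite dhomogX; apply/eqP; apply: mdeg1. Qed.

Lemma linform_homog (a : 'I_3 -> k) : linform a \is 1.-homog.
Proof. by apply: rpred_sum => i _; apply/rpredZ/dhomogXU. Qed.

Lemma dimA_ge j n : dimA I j n -> dim_mod_ge inI (forms j) n.
Proof. by case. Qed.

Lemma dimA_le j n : dimA I j n -> dim_mod_le inI (forms j) n.
Proof. by move=> [_ nfree]; apply: dim_mod_le_not_ge => -[f [fj free_f]]; apply: (nfree f). Qed.

Lemma dimA0_mem j p : dimA I j 0 -> p \is j.-homog -> p \in I.
Proof. by move/dimA_le; apply: dim_mod_le0_sub ideal_subspace. Qed.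

Definition mul_onto (L : R) j :=
  forall p, p \is j.+1.-homog -> exists2 g, g \is j.-homog & p - L * g \in I.

Lemma quot_vanishes_mul_onto L j : L \is 1.-homog -> quot_vanishes I L j.+1 -> mul_onto L j.
Proof.
move=> L1 van p pj; have [q [g [Iq def_p]]] := van p pj.
exists (pihomog mdeg j g); first exact: pihomogP.
rewrite -(pihomog_dE pj) def_p linearD /= (pihomog_mull _ _ L1 : pihomog _ j.+1 _ = _) addrK.
exact: ideal_pihomog.
Qed.

Lemma mul_onto_succ L j : mul_onto L j -> mul_onto L j.+1.
Proof.
move=> onto p pj; have sQ := subspace_image_mod (L \*o idfun) (homog_subspace j.+1) ideal_subspace.
rewrite [p]mpolyE big_seq; apply: (subspace_sum sQ) => m mp; apply: (subspaceZ sQ).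
have mdeg_m : mdeg m = j.+2 := dhomog_mf pj mp.
have [i mi] : exists i, m i != 0%N.
  case: (pickP (fun i => m i != 0%N)) => [i mi|m0]; first by exists i.
  by move: mdeg_m; rewrite mdegE big1 // => i _; apply/eqP/negbFE/m0.
have def_m : m = (m - U_(i) + U_(i))%MM by rewrite submK // lep1mP.
have [g gj Ig] : exists2 g, g \is j.-homog & 'X_[m - U_(i)] - L * g \in I.
  apply: onto; rewrite dhomogX; apply/eqP.
  by move: mdeg_m; rewrite {1}def_m mdegD mdeg1 addn1 => -[].
exists ('X_i * g); first exact: dhomogM1 (dhomogXU i) gj.
by rewrite /= {1}def_m mpolyXD mulrC mulrCA -mulrBr; apply: idealMl.
Qed.

Lemma mul_onto_le L i j : mul_onto L i -> (i <= j)%N -> mul_onto L j.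
Proof. by move=> onto /subnK <-; elim: (j - i)%N => // n IHn; apply: mul_onto_succ. Qed.

Definition ann (L : R) j p := p \is j.-homog /\ L * p \in I.

Lemma ann_subspace L j : subspace (ann L j).
Proof. exact: subspaceI (homog_subspace j) (mul_ideal_subspace L). Qed.

Lemma ann_dim_le L j a b : mul_onto L j -> dimA I j a -> dimA I j.+1 b ->
  dim_mod_le inI (ann L j) (a - b).
Proof.
move=> onto /dimA_le le_a /dimA_ge ge_b.
by apply: (dim_mod_le_ker (phi := L \*o idfun) ideal_subspace _ onto le_a ge_b) => p; apply: idealMl.
Qed.

Lemma ann_dim_ge L j a b : L \is 1.-homog -> dimA I j a -> dimA I j.+1 b ->
  dim_mod_ge inI (ann L j) (a - b).
Proof.
move=> L1 /dimA_ge ge_a /dimA_le le_b.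
have le_b' := dim_mod_le_comap (phi := L \*o idfun) (fun p => dhomogM1 L1) le_b.
have [n le_n ge_n] := free_mod_cap (homog_subspace j) ideal_subspace le_b' ge_a.
by apply: dim_mod_ge_le ge_n; rewrite leq_subLR addnC.
Qed.

Lemma mul_ann_mem L l z d m : l \is 1.-homog -> z \is 1.-homog ->
  dim_mod_ge inI (ann L d) (m + m) -> dim_mod_le inI (ann L d.+1) m ->
  (forall p, ann L d p -> l * p \in I -> z * p \in I -> p \in I) ->
  forall u, ann L d.+1 u -> l * u \in I.
Proof.
move=> l1 z1 ge_2m le_m z_inj.
have ann_mul y p : y \is 1.-homog -> ann L d p -> ann L d.+1 (y * p).
  by move=> y1 [pd Lp]; split; [apply: dhomogM1 | rewrite mulrCA; apply: idealMl].
have le_m' := dim_mod_le_comap (phi := l \*o idfun) (fun p => ann_mul l p l1) le_m.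
have [n le_n [w [Sw free_w]]] := free_mod_cap (ann_subspace L d) ideal_subspace le_m' ge_2m.
have free_zw : free_mod inI (fun i => z * w i).
  apply: (free_mod_map (phi := z \*o idfun) _ _ Sw free_w).
    exact: subspaceI (ann_subspace L d) (mul_ideal_subspace l).
  by move=> p [Kp lp]; apply: z_inj.
apply: (dim_mod_le_sub (mul_ideal_subspace l) (idealMl l) le_m).
apply: (dim_mod_ge_le (n := n)); first by rewrite -(leq_add2r m).
exists (fun i => z * w i); split=> // i; split; first exact: ann_mul (Sw i).1.
by rewrite mulrCA; apply: idealMl; exact: (Sw i).2.
Qed.

Lemma level_socle_mem e t p :
  (forall q, in_socle I q -> exists r, r \is e.-homog /\ q - r \in I) ->
  t != e -> p \is t.-homog -> in_socle I p -> p \in I.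
Proof.
move=> level te pt /level[r [re Ipr]]; have := ideal_pihomog t Ipr.
by rewrite linearB /= (pihomog_dE pt) (pihomog_ne0 _ re) 1?eq_sym // subr0.
Qed.

Lemma level_socle_top s n : dimA I s n -> (0 < n)%N -> dimA I s.+1 0 -> is_level I ->
  forall t p, t != s -> p \is t.-homog -> in_socle I p -> p \in I.
Proof.
move=> /dimA_ge ge_n n0 van [e level].
have [p ps pI] := dim_mod_ge_witness ge_n n0.
have soc_p : in_socle I p := fun j => dimA0_mem van (dhomogM1 (dhomogXU j) ps).
have [es|se] := eqVneq s e; first by subst e => t q; apply: level_socle_mem level.
by case: pI; apply: level_socle_mem level se ps soc_p.
Qed.

Lemma linform_socle a p : a ord0 != 0 -> linform a * p \in I ->
  'X_(lift ord0 ord0) * p \in I -> 'X_(lift ord0 ord_max) * p \in I -> in_socle I p.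
Proof.
move=> a0 Lp X1p X2p.
have Xp (j : 'I_2) : 'X_(lift ord0 j) * p \in I.
  by case: j => -[|[|//]] lt_j2; [move: X1p | move: X2p]; congr (_ \in I); do 3!f_equal; apply: val_inj.
move=> j; case: (unliftP ord0 j) => [j' ->|->] //; apply: (subspaceZK ideal_subspace a0).
have := subspaceB ideal_subspace Lp (subspace_comb ideal_subspace (fun j => a (lift ord0 j)) Xp).
rewrite /linform mulr_suml; under eq_bigr do rewrite -scalerAl.
by rewrite big_ord_recl addrK.
Qed.

Lemma ann_sub_socle a d m : a ord0 != 0 ->
  dim_mod_ge inI (ann (linform a) d) (m + m) -> dim_mod_le inI (ann (linform a) d.+1) m ->
  (forall p, ann (linform a) d p -> in_socle I p -> p \in I) ->
  forall u, ann (linform a) d.+1 u -> in_socle I u.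
Proof.
move=> a0 ge_2m le_m socle0 u Ku.
have X1 := dhomogXU (lift ord0 ord0); have X2 := dhomogXU (lift ord0 ord_max).
have inj12 p : ann (linform a) d p ->
    'X_(lift ord0 ord0) * p \in I -> 'X_(lift ord0 ord_max) * p \in I -> p \in I.
  by move=> Kp X1p X2p; apply: socle0 Kp (linform_socle a0 Kp.2 X1p X2p).
have X1u := mul_ann_mem X1 X2 ge_2m le_m inj12 Ku.
have X2u := mul_ann_mem X2 X1 ge_2m le_m (fun p Kp X2p X1p => inj12 p Kp X1p X2p) Ku.
exact: linform_socle a0 Ku.2 X1u X2u.
Qed.

End HomogeneousIdeal.

Lemma r1_mul_onto (k : fieldType) (I : pred {mpoly k[3]}) r : homog_ideal I ->
  [pchar k] =i pred0 -> is_r1 I r ->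
  exists2 a, a ord0 != 0 & forall j, (r <= j)%N -> mul_onto I (linform a) j.
Proof.
move=> HI k0 [gen _]; have [a a0 van] := general_linform k0 gen.
exists a => // j rj; exact: (mul_onto_le HI (quot_vanishes_mul_onto HI (linform_homog a) van) rj).
Qed.

Theorem corollary3p20 (k : fieldType) (Hchar : [pchar k] =i pred0)
  (I : pred {mpoly k[3]}) (HI : homog_ideal I)
  (h : nat -> nat) (Hh : forall i, dimA I i (h i))
  (s : nat) (h0 : h 0%N = 1%N) (h1 : h 1%N = 3%N)
  (hs : (0 < h s)%N) (hvan : forall i, (s < i)%N -> h i = 0%N)
  (r d : nat) (Hr : is_r1 I r) (Hrd : (r < d)%N) (Hds : (d < s)%N)
  (Heq : (h d.-1)%:Z - (h d)%:Z = 2%:Z * ((h d)%:Z - (h d.+1)%:Z))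
  (Hpos : (0 < (h d)%:Z - (h d.+1)%:Z)%R) :
  ~ is_level I.
Proof.
move=> level; have top0 : dimA I s.+1 0 by rewrite -(hvan _ (ltnSn s)).
have socle_mem := level_socle_top HI (Hh s) hs top0 level.
have [a a0 onto] := r1_mul_onto HI Hchar Hr.
case: d Hrd Hds Heq Hpos => [//|d] Hrd Hds /= Heq Hpos.
set m := (h d.+1 - h d.+2)%N; have m0 : (0 < m)%N by lia.
have ge_2m : dim_mod_ge (fun p => p \in I) (ann I (linform a) d) (m + m).
  rewrite (_ : m + m = h d - h d.+1)%N; last by lia.
  exact: (ann_dim_ge HI (linform_homog a) (Hh d) (Hh d.+1)).
have le_m : dim_mod_le (fun p => p \in I) (ann I (linform a) d.+1) m.
  exact: (ann_dim_le HI (onto _ (ltnW Hrd)) (Hh d.+1) (Hh d.+2)).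
have [u Ku uI] :=
  dim_mod_ge_witness (ann_dim_ge HI (linform_homog a) (Hh d.+1) (Hh d.+2)) m0.
have socle0 p : ann I (linform a) d p -> in_socle I p -> p \in I.
  by move=> [pd _]; apply: socle_mem pd; rewrite neq_ltn (ltn_trans (ltnSn d) Hds).
apply: uI (socle_mem _ _ _ Ku.1 (ann_sub_socle HI a0 ge_2m le_m socle0 Ku)).
by rewrite neq_ltn Hds.
Qed.
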